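(* Let $G$ be a locally finite graph and $F$ a subgraph of $G$. If $F$ is faithful to $G$, then the line graph $L(F)$ is faithful to the line graph $L(G)$.
   Context: $L(H)$ is the line graph of $H$ (vertices are edges of $H$, adjacent when sharing an endpoint); $L(F)$ is naturally a subgraph of $L(G)$. A ray is a one-way infinite path; two rays of a graph $H$ are equivalent in $H$ if for every finite $S\subseteq V(H)$ some component of $H-S$ contains tails of both; the classes are the ends of $H$. A subgraph $A$ of $B$ is faithful to $B$ if (i) every end of $B$ contains a ray of $A$, and (ii) any two rays of $A$ are equivalent in $A$ if and only if they are equivalent in $B$. *)

From Stdlib Require Import List Relations.
Set Implicit Arguments.

Record graph (T : Type) := Graph { vtx : T -> Prop; adj : T -> T -> Prop }.

Definition is_graph T (H : graph T) : Prop :=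
  (forall x y, adj H x y -> adj H y x) /\
  (forall x, ~ adj H x x) /\
  (forall x y, adj H x y -> vtx H x /\ vtx H y).

Definition locally_finite T (H : graph T) : Prop :=
  forall v, vtx H v -> exists l : list T, forall w, adj H v w -> In w l.

Definition subgraph T (A B : graph T) : Prop :=
  (forall x, vtx A x -> vtx B x) /\ (forall x y, adj A x y -> adj B x y).

Definition is_edge T (H : graph T) (e : T -> Prop) : Prop :=
  exists x y, adj H x y /\ e = (fun z => z = x \/ z = y).

Definition line_graph T (H : graph T) : graph (T -> Prop) :=
  {| vtx := is_edge H;
     adj := fun e f => is_edge H e /\ is_edge H f /\ e <> f /\ exists x, e x /\ f x |}.

Definition is_ray T (H : graph T) (r : nat -> T) : Prop :=
  (forall n, vtx H (r n)) /\
  (forall n, adj H (r n) (r (S n))) /\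
  (forall m n, r m = r n -> m = n).

(* x lies in the component of H - S containing v (v, x vertices of H - S). *)
Definition avoid_adj T (H : graph T) (S : list T) : relation T :=
  fun x y => adj H x y /\ ~ In x S /\ ~ In y S.

Definition in_comp T (H : graph T) (S : list T) (v x : T) : Prop :=
  vtx H x /\ ~ In x S /\ clos_refl_trans T (avoid_adj H S) v x.

Definition tail_in_comp T (H : graph T) (S : list T) (v : T) (r : nat -> T) : Prop :=
  exists k, forall n, k <= n -> in_comp H S v (r n).

Definition ray_equiv T (H : graph T) (r s : nat -> T) : Prop :=
  forall S : list T, (forall x, In x S -> vtx H x) ->
    exists v, vtx H v /\ ~ In v S /\ tail_in_comp H S v r /\ tail_in_comp H S v s.

(* A is faithful to B: (i) every end of B contains a ray of A;
   (ii) rays of A are equivalent in A iff they are equivalent in B. *)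
Definition faithful T (A B : graph T) : Prop :=
  (forall r, is_ray B r -> exists r', is_ray A r' /\ ray_equiv B r' r) /\
  (forall r s, is_ray A r -> is_ray A s -> (ray_equiv A r s <-> ray_equiv B r s)).

(** Rays of [H] and rays of [L(H)] correspond: a ray [r] of [H] gives the
    ray of its edges [r 0 r 1, r 1 r 2, ...], and for locally finite [H] every ray
    of [L(H)] is equivalent to such an edge ray.  To see this, pick a common
    endpoint [w n] of the consecutive edges [R n] and [R (n+1)]; by local finiteness
    every vertex occurs only finitely often in [w], and jumping each time to the
    last visit of the current vertex turns [w] into a ray whose edges form a
    subsequence of [R].  Finite vertex sets of [H] and finite edge sets of [L(H)]
    are interchangeable up to taking endpoints resp. incident edges (finitely many
    by local finiteness), and walks avoiding one lift resp. project to walks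
    avoiding the other, so two rays of [H] are equivalent in [H] iff their edge
    rays are equivalent in [L(H)].  Both properties of faithfulness then transfer
    from [F ⊆ G] to [L(F) ⊆ L(G)]. *)

From Stdlib Require Import List Relations Classical ClassicalEpsilon
  FunctionalExtensionality PropExtensionality Arith Lia.

Lemma clos_rt_sym {A : Type} {R : relation A} :
  (forall x y, R x y -> R y x) ->
  forall x y, clos_refl_trans A R x y -> clos_refl_trans A R y x.
Proof. intros Rsym x y Hxy; induction Hxy; eauto using rt_step, rt_refl, rt_trans. Qed.

Lemma clos_rt_incl {A : Type} {R R' : relation A} :
  inclusion A R R' -> inclusion A (clos_refl_trans A R) (clos_refl_trans A R').
Proof. intros HR x y Hxy; induction Hxy; eauto using rt_step, rt_refl, rt_trans. Qed.

Lemma list_restrict {A : Type} (P : A -> Prop) (l : list A) :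
  exists l', (forall x, In x l' -> P x) /\ (forall x, In x l -> P x -> In x l').
Proof.
  induction l as [| a l (l' & HP & Hl)].
  - exists nil; split; intros x [].
  - destruct (classic (P a)) as [Pa | Pa].
    + exists (a :: l'). split.
      * intros x [<- | Hx]; auto.
      * intros x [<- | Hx] Px; [left | right]; auto.
    + exists l'. split; [exact HP |]. intros x [<- | Hx] Px; [contradiction | auto].
Qed.

Lemma list_cover_union {A B : Type} (P : A -> B -> Prop) (l : list A) :
  (forall a, In a l -> exists lb, forall b, P a b -> In b lb) ->
  exists L, forall a b, In a l -> P a b -> In b L.
Proof.
  induction l as [| a l IH]; intros Hfin.
  - exists nil; intros a b [].
  - destruct (Hfin a (or_introl eq_refl)) as [la Hla].
    destruct IH as [L HL]; [intros a' Ha'; apply Hfin; right; exact Ha' |].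
    exists (la ++ L). intros a' b [<- | Ha'] Hb; apply in_or_app; [left | right]; eauto.
Qed.

Lemma injective_eventually_avoids {A : Type} (f : nat -> A) :
  (forall m n, f m = f n -> m = n) ->
  forall l : list A, exists k, forall n, k <= n -> ~ In (f n) l.
Proof.
  intros Hinj l. induction l as [| a l [k Hk]].
  - exists 0; intros n _ [].
  - destruct (classic (exists m, f m = a)) as [[m Hm] | Hno].
    + exists (max k (S m)). intros n Hn [Ha | Hin].
      * rewrite Ha in Hm. apply Hinj in Hm. lia.
      * apply (Hk n); [lia | exact Hin].
    + exists k. intros n Hn [Ha | Hin]; [apply Hno; eauto | exact (Hk n Hn Hin)].
Qed.

Lemma bounded_pred_has_max (P : nat -> Prop) (N j : nat) :
  P j -> (forall p, P p -> p < N) -> exists m, P m /\ forall p, P p -> p <= m.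
Proof.
  revert j. induction N as [| N IH]; intros j Pj HN.
  - specialize (HN j Pj); lia.
  - destruct (classic (P N)) as [PN | PN].
    + exists N; split; [exact PN |]. intros p Pp; specialize (HN p Pp); lia.
    + apply (IH j Pj). intros p Pp. specialize (HN p Pp).
      destruct (Nat.eq_dec p N) as [-> | ]; [contradiction | lia].
Qed.

Lemma increasing_lt (f : nat -> nat) :
  (forall k, f k < f (S k)) -> forall k m, k < m -> f k < f m.
Proof.
  intros Hf k m Hkm. induction Hkm as [| m _ IH]; [apply Hf |].
  specialize (Hf m); lia.
Qed.

Lemma increasing_ge_id (f : nat -> nat) : (forall k, f k < f (S k)) -> forall k, k <= f k.
Proof. intros Hf k. induction k as [| k IH]; [lia |]. specialize (Hf k); lia. Qed.

Lemma last_visit_sequence {A : Type} (w : nat -> A) :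
  (forall j, exists N, forall p, N <= p -> w p <> w j) ->
  exists phi : nat -> nat,
    (forall k, w (phi (S k)) = w (S (phi k))) /\
    (forall k p, w p = w (phi k) -> p <= phi k).
Proof.
  intros Hfin.
  destruct (choice (fun j m => w m = w j /\ forall p, w p = w j -> p <= m))
    as [last Hlast].
  { intro j. destruct (Hfin j) as [N HN].
    apply (bounded_pred_has_max (fun p => w p = w j) N j eq_refl).
    intros p Hp. destruct (Nat.lt_ge_cases p N) as [| HpN]; [assumption |].
    contradiction (HN p HpN Hp). }
  set (phi := fix phi k := match k with 0 => last 0 | S k => last (S (phi k)) end).
  assert (Hphi : forall k, exists j, phi k = last j) by (intros [| k]; eexists; reflexivity).
  exists phi. split.
  - intro k. exact (proj1 (Hlast _)).
  - intros k p Hp. destruct (Hphi k) as [j Ej]. rewrite Ej in Hp |- *.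
    rewrite (proj1 (Hlast j)) in Hp. exact (proj2 (Hlast j) p Hp).
Qed.

Lemma pred_ext {T : Type} (e f : T -> Prop) : (forall z, e z <-> f z) -> e = f.
Proof.
  intro Hef. apply functional_extensionality; intro z.
  apply propositional_extensionality, Hef.
Qed.

Definition edg {T : Type} (x y : T) : T -> Prop := fun z => z = x \/ z = y.

Definition ray_edges {T : Type} (r : nat -> T) (n : nat) : T -> Prop := edg (r n) (r (S n)).

Lemma edg_sym {T : Type} (x y : T) : edg x y = edg y x.
Proof. apply pred_ext; unfold edg; tauto. Qed.

Lemma edg_eq_mem {T : Type} {a b c d : T} : edg a b = edg c d -> a = c \/ a = d.
Proof. intro E. change (edg c d a). rewrite <- E. left; reflexivity. Qed.

Definition tails_connected {T : Type} (H : graph T) (S : list T) (k : nat)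
    (r s : nat -> T) : Prop :=
  (forall n, k <= n -> ~ In (r n) S /\ ~ In (s n) S) /\
  clos_refl_trans T (avoid_adj H S) (r k) (s k).

Section Rays.

Context {T : Type} {H : graph T}.
Hypothesis HG : is_graph H.

Lemma avoid_connected_sym S x y :
  clos_refl_trans T (avoid_adj H S) x y -> clos_refl_trans T (avoid_adj H S) y x.
Proof.
  apply clos_rt_sym. intros a b (Hab & Ha & Hb).
  split; [apply (proj1 HG); exact Hab | split; assumption].
Qed.

Lemma ray_equiv_sym r s : ray_equiv H r s -> ray_equiv H s r.
Proof.
  intros Hrs S HS. destruct (Hrs S HS) as (v & Hv & HvS & Hr & Hs).
  exists v; auto.
Qed.

Lemma ray_equiv_trans {r s t : nat -> T} :
  ray_equiv H r s -> ray_equiv H s t -> ray_equiv H r t.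
Proof.
  intros Hrs Hst S HS.
  destruct (Hrs S HS) as (v & Hv & HvS & Hr & [k2 Hs]).
  destruct (Hst S HS) as (u & _ & _ & [k3 Hs'] & [k4 Ht]).
  exists v. split; [exact Hv | split; [exact HvS | split; [exact Hr |]]].
  exists k4. intros n Hn. destruct (Ht n Hn) as (Htn & HtS & Put).
  split; [exact Htn | split; [exact HtS |]].
  destruct (Hs (max k2 k3) ltac:(lia)) as (_ & _ & Pvs).
  destruct (Hs' (max k2 k3) ltac:(lia)) as (_ & _ & Pus).
  eapply rt_trans; [exact Pvs |]. eapply rt_trans; [| exact Put].
  apply avoid_connected_sym, Pus.
Qed.

Lemma ray_tail_connected {S : list T} {r : nat -> T} {k n : nat} :
  is_ray H r -> (forall m, k <= m -> ~ In (r m) S) -> k <= n ->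
  clos_refl_trans T (avoid_adj H S) (r k) (r n).
Proof.
  intros (_ & Ha & _) Hout Hn. induction Hn as [| n Hn IH]; [apply rt_refl |].
  eapply rt_trans; [exact IH |]. apply rt_step.
  split; [apply Ha | split; apply Hout; lia].
Qed.

Lemma ray_equiv_subseq r phi :
  is_ray H r -> (forall n, n <= phi n) -> ray_equiv H r (fun n => r (phi n)).
Proof.
  intros Hr Hphi S _.
  destruct (injective_eventually_avoids r (proj2 (proj2 Hr)) S) as [k Hk].
  assert (Hcomp : forall n, k <= n -> in_comp H S (r k) (r n)).
  { intros n Hn. split; [apply (proj1 Hr) | split; [exact (Hk n Hn) |]].
    exact (ray_tail_connected Hr Hk Hn). }
  exists (r k). split; [apply (proj1 Hr) | split; [exact (Hk k (le_n k)) | split]].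
  - exists k; exact Hcomp.
  - exists k. intros n Hn. apply Hcomp. specialize (Hphi n); lia.
Qed.

Lemma ray_equiv_tails_connected {r s : nat -> T} {S : list T} :
  ray_equiv H r s -> (forall x, In x S -> vtx H x) -> exists k, tails_connected H S k r s.
Proof.
  intros Hrs HS. destruct (Hrs S HS) as (v & _ & _ & [k1 Hr] & [k2 Hs]).
  exists (max k1 k2). split.
  - intros n Hn.
    destruct (Hr n ltac:(lia)) as (_ & Hrn & _). destruct (Hs n ltac:(lia)) as (_ & Hsn & _).
    split; assumption.
  - destruct (Hr (max k1 k2) ltac:(lia)) as (_ & _ & Pr).
    destruct (Hs (max k1 k2) ltac:(lia)) as (_ & _ & Ps).
    eapply rt_trans; [apply avoid_connected_sym, Pr | exact Ps].
Qed.

Lemma ray_equiv_of_tails_connected r s :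
  is_ray H r -> is_ray H s ->
  (forall S, (forall x, In x S -> vtx H x) -> exists k, tails_connected H S k r s) ->
  ray_equiv H r s.
Proof.
  intros Hr Hs Hconn S HS. destruct (Hconn S HS) as (k & Hout & Hrs).
  assert (Hr_out : forall n, k <= n -> ~ In (r n) S) by (intros n Hn; exact (proj1 (Hout n Hn))).
  assert (Hs_out : forall n, k <= n -> ~ In (s n) S) by (intros n Hn; exact (proj2 (Hout n Hn))).
  exists (r k). split; [apply (proj1 Hr) | split; [exact (Hr_out k (le_n k)) | split]].
  - exists k. intros n Hn. split; [apply (proj1 Hr) | split; [exact (Hr_out n Hn) |]].
    exact (ray_tail_connected Hr Hr_out Hn).
  - exists k. intros n Hn. split; [apply (proj1 Hs) | split; [exact (Hs_out n Hn) |]].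
    eapply rt_trans; [exact Hrs | exact (ray_tail_connected Hs Hs_out Hn)].
Qed.

End Rays.

Lemma is_ray_subgraph {T : Type} {A B : graph T} {r : nat -> T} :
  subgraph A B -> is_ray A r -> is_ray B r.
Proof. intros [Hv Ha] (Hr1 & Hr2 & Hr3). split; [auto | split; auto]. Qed.

Lemma ray_equiv_subgraph {T : Type} {A B : graph T} {r s : nat -> T} :
  is_graph A -> subgraph A B -> is_ray A r -> is_ray A s ->
  ray_equiv A r s -> ray_equiv B r s.
Proof.
  intros HA Hsub Hr Hs Hrs.
  apply ray_equiv_of_tails_connected;
    [exact (is_ray_subgraph Hsub Hr) | exact (is_ray_subgraph Hsub Hs) |].
  intros S _. destruct (list_restrict (vtx A) S) as (S' & HS'A & HSS').
  destruct (ray_equiv_tails_connected HA Hrs HS'A) as (k & Hout & Hconn).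
  assert (Hnot : forall x, vtx A x -> ~ In x S' -> ~ In x S)
    by (intros x Hx Hn Hin; exact (Hn (HSS' x Hin Hx))).
  exists k. split.
  - intros n Hn. destruct (Hout n Hn) as [Hrn Hsn].
    split; apply Hnot; [apply (proj1 Hr) | exact Hrn | apply (proj1 Hs) | exact Hsn].
  - revert Hconn. apply clos_rt_incl. intros x y (Hxy & Hx & Hy).
    destruct (proj2 (proj2 HA) x y Hxy) as [HxA HyA].
    split; [apply (proj2 Hsub), Hxy | split; apply Hnot; assumption].
Qed.

Lemma line_graph_is_graph {T : Type} (H : graph T) : is_graph (line_graph H).
Proof.
  split; [| split].
  - intros e f (He & Hf & Hne & x & Hex & Hfx).
    split; [exact Hf | split; [exact He | split; [congruence | exists x; split; assumption]]].
  - intros e (_ & _ & Hne & _). apply Hne; reflexivity.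
  - intros e f (He & Hf & _). split; assumption.
Qed.

Lemma line_graph_subgraph {T : Type} {A B : graph T} :
  subgraph A B -> subgraph (line_graph A) (line_graph B).
Proof.
  intros [_ Ha].
  assert (HE : forall e, is_edge A e -> is_edge B e)
    by (intros e (x & y & Hxy & Heq); exists x, y; auto).
  split; [exact HE |]. intros e f (He & Hf & Hef). split; [auto | split; auto].
Qed.

Lemma locally_finite_subgraph {T : Type} {A B : graph T} :
  locally_finite B -> subgraph A B -> locally_finite A.
Proof. intros Hlf [Hv Ha] v Hvv. destruct (Hlf v (Hv v Hvv)) as [l Hl]. exists l; auto. Qed.

Section LineGraph.

Context {T : Type} {H : graph T}.
Hypothesis HG : is_graph H.
Hypothesis Hlf : locally_finite H.

Lemma edge_vtx {e : T -> Prop} {z : T} : is_edge H e -> e z -> vtx H z.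
Proof.
  intros (a & b & Hab & ->) Hz. destruct (proj2 (proj2 HG) a b Hab).
  destruct Hz as [-> | ->]; assumption.
Qed.

Lemma edge_at {e : T -> Prop} {x : T} :
  is_edge H e -> e x -> exists y, adj H x y /\ e = edg x y.
Proof.
  intros (a & b & Hab & ->) [-> | ->].
  - exists b; split; [exact Hab | reflexivity].
  - exists a; split; [apply (proj1 HG), Hab | exact (edg_sym a b)].
Qed.

Lemma edge_adj {e : T -> Prop} {x y : T} :
  is_edge H e -> e x -> e y -> x <> y -> adj H x y.
Proof.
  intros (a & b & Hab & ->) [-> | ->] [-> | ->] Hxy;
    first [congruence | exact Hab | exact (proj1 HG a b Hab)].
Qed.

Lemma edge_eq {e : T -> Prop} {x y : T} :
  is_edge H e -> e x -> e y -> x <> y -> e = edg x y.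
Proof.
  intros (a & b & _ & ->) [-> | ->] [-> | ->] Hxy;
    first [congruence | reflexivity | exact (edg_sym a b)].
Qed.

Lemma is_ray_edges {r : nat -> T} : is_ray H r -> is_ray (line_graph H) (ray_edges r).
Proof.
  intros (Hv & Ha & Hinj).
  assert (Hedge : forall n, is_edge H (ray_edges r n))
    by (intro n; exists (r n), (r (S n)); split; [apply Ha | reflexivity]).
  split; [exact Hedge | split].
  - intro n. split; [apply Hedge | split; [apply Hedge | split]].
    + intro E. destruct (edg_eq_mem E) as [E' | E']; apply Hinj in E'; lia.
    + exists (r (S n)); split; [right | left]; reflexivity.
  - intros m n E.
    destruct (edg_eq_mem E) as [E1 | E1]; destruct (edg_eq_mem (eq_sym E)) as [E2 | E2];
      apply Hinj in E1; apply Hinj in E2; lia.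
Qed.

Lemma endpoints_list {X : list (T -> Prop)} :
  (forall e, In e X -> is_edge H e) ->
  exists SV, (forall x, In x SV -> vtx H x) /\ (forall e x, In e X -> e x -> In x SV).
Proof.
  intros HX. destruct (list_cover_union (fun e x => e x) X) as [L HL].
  { intros e He. destruct (HX e He) as (a & b & _ & ->).
    exists (a :: b :: nil). intros x [-> | ->]; simpl; auto. }
  destruct (list_restrict (vtx H) L) as (SV & HSV & HLSV).
  exists SV. split; [exact HSV |]. intros e x He Hex.
  exact (HLSV x (HL e x He Hex) (edge_vtx (HX e He) Hex)).
Qed.

Lemma incident_edges_list {SV : list T} :
  (forall x, In x SV -> vtx H x) ->
  exists X, (forall e, In e X -> is_edge H e) /\
            (forall e x, is_edge H e -> e x -> In x SV -> In e X).
Proof.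
  intros HSV. destruct (list_cover_union (fun x e => is_edge H e /\ e x) SV) as [L HL].
  { intros x Hx. destruct (Hlf x (HSV x Hx)) as [l Hl]. exists (map (edg x) l).
    intros e [He Hex]. destruct (edge_at He Hex) as (y & Hxy & ->). apply in_map, Hl, Hxy. }
  destruct (list_restrict (is_edge H) L) as (X & HX & HLX).
  exists X. split; [exact HX |]. intros e x He Hex Hx.
  exact (HLX e (HL x e Hx (conj He Hex)) He).
Qed.

Lemma line_graph_share_connected {X : list (T -> Prop)} {SV : list T}
    {e f : T -> Prop} {a : T} :
  (forall e x, In e X -> e x -> In x SV) ->
  is_edge H e -> is_edge H f -> e a -> f a -> ~ In a SV ->
  clos_refl_trans _ (avoid_adj (line_graph H) X) e f.
Proof.
  intros HX He Hf Hea Hfa Ha.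
  assert (Hout : forall g, g a -> ~ In g X) by (intros g Hga Hg; exact (Ha (HX g a Hg Hga))).
  destruct (classic (e = f)) as [<- | Hne]; [apply rt_refl |].
  apply rt_step. split; [| split; apply Hout; assumption].
  split; [exact He | split; [exact Hf | split; [exact Hne | exists a; split; assumption]]].
Qed.

Lemma line_graph_lift_path {X : list (T -> Prop)} {SV : list T} :
  (forall e x, In e X -> e x -> In x SV) ->
  forall a b, clos_refl_trans T (avoid_adj H SV) a b -> ~ In a SV ->
  forall e f, is_edge H e -> is_edge H f -> e a -> f b ->
  clos_refl_trans _ (avoid_adj (line_graph H) X) e f.
Proof.
  intros HX a b Hab. apply clos_rt_rt1n in Hab.
  induction Hab as [a | a a' b Hstep _ IH]; intros Ha e f He Hf Hea Hfb.
  - exact (line_graph_share_connected HX He Hf Hea Hfb Ha).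
  - destruct Hstep as (Haa' & _ & Ha').
    assert (Hedge : is_edge H (edg a a')) by (exists a, a'; split; [exact Haa' | reflexivity]).
    eapply rt_trans.
    + apply (line_graph_share_connected HX He Hedge Hea); [left; reflexivity | exact Ha].
    + apply IH; [exact Ha' | exact Hedge | exact Hf | right; reflexivity | exact Hfb].
Qed.

Lemma edge_connected_outside {X : list (T -> Prop)} {SV : list T}
    {e : T -> Prop} {a b : T} :
  (forall e x, is_edge H e -> e x -> In x SV -> In e X) ->
  is_edge H e -> ~ In e X -> e a -> e b -> clos_refl_trans T (avoid_adj H SV) a b.
Proof.
  intros HX He HeX Ha Hb.
  assert (Hout : forall z, e z -> ~ In z SV)
    by (intros z Hz Hin; exact (HeX (HX e z He Hz Hin))).
  destruct (classic (a = b)) as [<- | Hab]; [apply rt_refl |].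
  apply rt_step. split; [exact (edge_adj He Ha Hb Hab) | split; apply Hout; assumption].
Qed.

Lemma line_graph_project_path {X : list (T -> Prop)} {SV : list T} :
  (forall e x, is_edge H e -> e x -> In x SV -> In e X) ->
  forall e f, clos_refl_trans _ (avoid_adj (line_graph H) X) e f ->
  is_edge H e -> ~ In e X -> forall a b, e a -> f b ->
  clos_refl_trans T (avoid_adj H SV) a b.
Proof.
  intros HX e f Hef. apply clos_rt_rt1n in Hef.
  induction Hef as [e | e e' f Hstep _ IH]; intros He HeX a b Ha Hb.
  - exact (edge_connected_outside HX He HeX Ha Hb).
  - destruct Hstep as ((_ & He' & _ & x & Hex & He'x) & _ & He'X).
    eapply rt_trans; [exact (edge_connected_outside HX He HeX Ha Hex) |].
    exact (IH He' He'X x b He'x Hb).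
Qed.

Lemma ray_equiv_edges {r s : nat -> T} :
  is_ray H r -> is_ray H s -> ray_equiv H r s ->
  ray_equiv (line_graph H) (ray_edges r) (ray_edges s).
Proof.
  intros Hr Hs Hrs.
  apply ray_equiv_of_tails_connected; [exact (is_ray_edges Hr) | exact (is_ray_edges Hs) |].
  intros X HX. destruct (endpoints_list HX) as (SV & HSV & HXSV).
  destruct (ray_equiv_tails_connected HG Hrs HSV) as (k & Hout & Hconn).
  assert (Hedge_out : forall (q : nat -> T) n, ~ In (q n) SV -> ~ In (ray_edges q n) X)
    by (intros q n Hq Hin; exact (Hq (HXSV _ _ Hin (or_introl eq_refl)))).
  exists k. split.
  - intros n Hn. destruct (Hout n Hn). split; apply Hedge_out; assumption.
  - apply (line_graph_lift_path HXSV _ _ Hconn (proj1 (Hout k (le_n k))));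
      [exact (proj1 (is_ray_edges Hr) k) | exact (proj1 (is_ray_edges Hs) k)
      | left; reflexivity | left; reflexivity].
Qed.

Lemma ray_equiv_of_edges {r s : nat -> T} :
  is_ray H r -> is_ray H s ->
  ray_equiv (line_graph H) (ray_edges r) (ray_edges s) -> ray_equiv H r s.
Proof.
  intros Hr Hs Hrs. apply ray_equiv_of_tails_connected; [exact Hr | exact Hs |].
  intros SV HSV. destruct (incident_edges_list HSV) as (X & HX & HSVX).
  destruct (ray_equiv_tails_connected (line_graph_is_graph H) Hrs HX) as (k & Hout & Hconn).
  assert (Hvtx_out : forall q n, is_ray H q -> ~ In (ray_edges q n) X -> ~ In (q n) SV)
    by (intros q n Hq He Hin;
        exact (He (HSVX _ _ (proj1 (is_ray_edges Hq) n) (or_introl eq_refl) Hin))).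
  exists k. split.
  - intros n Hn. destruct (Hout n Hn). split; eapply Hvtx_out; eauto.
  - apply (line_graph_project_path HSVX _ _ Hconn (proj1 (is_ray_edges Hr) k)
             (proj1 (Hout k (le_n k)))); left; reflexivity.
Qed.

Lemma line_ray_eventually_avoids {R : nat -> T -> Prop} (x : T) :
  is_ray (line_graph H) R -> exists N, forall n, N <= n -> ~ R n x.
Proof.
  intros (HRv & _ & HRinj). destruct (classic (vtx H x)) as [Hx | Hx].
  - destruct (Hlf x Hx) as [l Hl].
    destruct (injective_eventually_avoids R HRinj (map (edg x) l)) as [N HN].
    exists N. intros n Hn HRx. apply (HN n Hn).
    destruct (edge_at (HRv n) HRx) as (y & Hxy & ->). apply in_map, Hl, Hxy.
  - exists 0. intros n _ HRx. exact (Hx (edge_vtx (HRv n) HRx)).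
Qed.

Lemma line_ray_equiv_edges {R : nat -> T -> Prop} :
  is_ray (line_graph H) R ->
  exists r, is_ray H r /\ ray_equiv (line_graph H) (ray_edges r) R.
Proof.
  intros HR. pose proof HR as (HRv & HRa & _).
  destruct (choice (fun n x => R n x /\ R (S n) x)) as [w Hw].
  { intro n. destruct (HRa n) as (_ & _ & _ & x & Hx). exists x; exact Hx. }
  destruct (last_visit_sequence w) as (phi & Hnext & Hlast).
  { intro j. destruct (line_ray_eventually_avoids (w j) HR) as [N HN].
    exists N. intros p Hp E. apply (HN p Hp). rewrite <- E. exact (proj1 (Hw p)). }
  assert (Hincr : forall k, phi k < phi (S k))
    by (intro k; exact (Hlast (S k) _ (eq_sym (Hnext k)))).
  set (r := fun k => w (phi k)).
  assert (Hdistinct : forall k, r k <> r (S k)).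
  { intros k E. unfold r in E. rewrite Hnext in E. specialize (Hlast k _ (eq_sym E)). lia. }
  assert (Hin : forall k, R (S (phi k)) (r k) /\ R (S (phi k)) (r (S k))).
  { intro k. unfold r. rewrite Hnext. split; [exact (proj2 (Hw _)) | exact (proj1 (Hw _))]. }
  assert (Hr : is_ray H r).
  { split; [| split].
    - intro k. exact (edge_vtx (HRv _) (proj1 (Hw (phi k)))).
    - intro k. exact (edge_adj (HRv _) (proj1 (Hin k)) (proj2 (Hin k)) (Hdistinct k)).
    - intros k m E. unfold r in E.
      pose proof (Hlast k _ (eq_sym E)). pose proof (Hlast m _ E).
      destruct (Nat.lt_trichotomy k m) as [Hkm | [Hkm | Hkm]];
        [apply (increasing_lt phi Hincr) in Hkm; lia | exact Hkm
        | apply (increasing_lt phi Hincr) in Hkm; lia]. }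
  exists r. split; [exact Hr |].
  replace (ray_edges r) with (fun k => R (S (phi k))).
  - apply ray_equiv_sym, ray_equiv_subseq; [exact HR |].
    intro n. pose proof (increasing_ge_id phi Hincr n). lia.
  - apply functional_extensionality. intro k.
    exact (edge_eq (HRv _) (proj1 (Hin k)) (proj2 (Hin k)) (Hdistinct k)).
Qed.

End LineGraph.

Theorem lemma27 (T : Type) (G F : graph T) :
  is_graph G -> is_graph F -> locally_finite G -> subgraph F G ->
  faithful F G -> faithful (line_graph F) (line_graph G).
Proof.
  intros HG HF Hlf Hsub [Hends Hequiv].
  pose proof (locally_finite_subgraph Hlf Hsub) as HlfF.
  pose proof (line_graph_is_graph G) as HLG. pose proof (line_graph_is_graph F) as HLF.
  pose proof (line_graph_subgraph Hsub) as HLsub.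
  split.
  - intros R HR.
    destruct (line_ray_equiv_edges HG Hlf HR) as (r & Hr & HrR).
    destruct (Hends r Hr) as (r' & Hr' & Hr'r).
    exists (ray_edges r'). split; [exact (is_ray_edges Hr') |].
    apply (ray_equiv_trans HLG (s := ray_edges r)); [| exact HrR].
    exact (ray_equiv_edges HG (is_ray_subgraph Hsub Hr') Hr Hr'r).
  - intros R S HR HS. split; [exact (ray_equiv_subgraph HLF HLsub HR HS) |]. intro HRS.
    destruct (line_ray_equiv_edges HF HlfF HR) as (r & Hr & HrR).
    destruct (line_ray_equiv_edges HF HlfF HS) as (s & Hs & HsS).
    assert (Hrs_G : ray_equiv G r s).
    { apply (ray_equiv_of_edges HG Hlf (is_ray_subgraph Hsub Hr) (is_ray_subgraph Hsub Hs)).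
      apply (ray_equiv_trans HLG (s := R));
        [exact (ray_equiv_subgraph HLF HLsub (is_ray_edges Hr) HR HrR) |].
      apply (ray_equiv_trans HLG (s := S)); [exact HRS |].
      apply ray_equiv_sym. exact (ray_equiv_subgraph HLF HLsub (is_ray_edges Hs) HS HsS). }
    pose proof (ray_equiv_edges HF Hr Hs (proj2 (Hequiv r s Hr Hs) Hrs_G)) as Hrs_LF.
    apply (ray_equiv_trans HLF (s := ray_edges r)); [apply ray_equiv_sym, HrR |].
    exact (ray_equiv_trans HLF Hrs_LF HsS).
Qed.
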